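(* Let $n, r, d$ be positive integers with $n\geqslant r+1$ and $d\geqslant2$. Then $\mathcal{C}_r^d$ is a percolating set of $K_n^d$ in the $r$-neighbor bootstrap percolation process.
   Context: All graphs are finite, simple and undirected. For a nonnegative integer $r$ and a graph $G$, the $r$-neighbor bootstrap percolation process on $G$ starts with a set $A_0\subseteq V(G)$ of initially active vertices, and for $i\geqslant 1$, $A_i=A_{i-1}\cup\{v\in V(G) : |N(v)\cap A_{i-1}|\geqslant r\}$. The set $A_0$ is a percolating set if $\bigcup_{i\geqslant 0}A_i=V(G)$. $K_n^d$ has vertex set $[\![n]\!]^d$, where $[\![n]\!]=\{0,1,\ldots,n-1\}$, and two vertices are adjacent iff they differ in exactly one coordinate. Let $\delta=(d-2)/(d-1)$. For $t=(t_1,\ldots,t_d)\in\{0,1\}^d$ and $P\subseteq[\![n]\!]^d$, let $P(t)$ be the set of $(x_1,\ldots,x_d)\in[\![n]\!]^d$ for which there is $(p_1,\ldots,p_d)\in P$ with $x_i=t_i(n-1-p_i)+(1-t_i)p_i$ for all $i$. Let $A_r^d=\{(x_1,\ldots,x_d)\in[\![n]\!]^d : \sum_{i=1}^d x_i\leqslant\lceil r/2\rceil-1\}$, $B_r^d=\{(x_1,\ldots,x_d)\in[\![n]\!]^d : x_1+x_2+\delta\sum_{i=3}^d x_i<\delta(\lceil r/2\rceil-1)\}$, $C_r^d=A_r^d\setminus B_r^d$, $T=\{(t_1,\ldots,t_d)\in\{0,1\}^d : t_1=t_2\}$, and $\mathcal{C}_r^d=\bigcup_{t\in T}C_r^d(t)$.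 *)

From HB Require Import structures.
From mathcomp Require Import all_boot all_order all_algebra.
Set Implicit Arguments. Unset Strict Implicit. Unset Printing Implicit Defensive.
Import Order.TTheory GRing.Theory Num.Theory.

Definition vtx (n d : nat) := {ffun 'I_d -> 'I_n}.

Definition adjK (n d : nat) (x y : vtx n d) : bool :=
  #|[set i | x i != y i]| == 1%N.

Fixpoint boot (n d r : nat) (A0 : {set vtx n d}) (k : nat) : {set vtx n d} :=
  match k with
  | 0 => A0
  | k'.+1 => let A := boot r A0 k' in
      A :|: [set v : vtx n d | (r <= #|[set u | adjK v u && (u \in A)]|)%N]
  end.

Definition percolating (n d r : nat) (A0 : {set vtx n d}) : Prop :=
  forall v : vtx n d, exists k, v \in boot r A0 k.

Definition cr (r : nat) : nat := (uphalf r).-1.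

Definition delta (d : nat) : rat := ((d%:R - 2) / (d%:R - 1))%R.

Definition Aset (n d r : nat) : {set vtx n d} :=
  [set x : vtx n d | (\sum_(i < d) (x i : nat) <= cr r)%N].

Definition wt (d : nat) (i : 'I_d) : rat := if (i < 2)%N then 1%R else delta d.

Definition Bset (n d r : nat) : {set vtx n d} :=
  [set x : vtx n d | (\sum_(i < d) wt i * ((x i : nat)%:R) < delta d * (cr r)%:R)%R].

Definition Cset (n d r : nat) : {set vtx n d} := Aset n d r :\: Bset n d r.

Definition refl (n d : nat) (t : {ffun 'I_d -> bool}) (p : vtx n d) : vtx n d :=
  [ffun i => if t i then rev_ord (p i) else p i].

Definition reflset (n d : nat) (P : {set vtx n d}) (t : {ffun 'I_d -> bool})
  : {set vtx n d} := [set x : vtx n d | [exists p in P, x == refl t p]].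

(* value of t at the coordinate with (0-based) index k *)
Definition tc (d : nat) (t : {ffun 'I_d -> bool}) (k : nat) : bool :=
  [exists i : 'I_d, (val i == k) && t i].

Definition Tset (d : nat) : {set {ffun 'I_d -> bool}} := [set t | tc t 0 == tc t 1].

Definition calC (n d r : nat) : {set vtx n d} :=
  \bigcup_(t in Tset d) reflset (Cset n d r) t.

(* Let c = ceil(r/2) - 1, so that r <= 2c + 2 <= n.  The process stops at a set
   closed under the r-neighbour rule, so it suffices to show that a closed set S
   containing C_r^d is everything.  The points of S all of whose T-reflections lie
   in S again form a closed set, and it contains the simplex A = {sum x_i <= c}:
   by induction on (c - x_1 - x_2, sum x_i), a point of A \ C has c - sum x_i
   neighbours with larger x_1 + x_2 along each head coordinate, and along each
   other coordinate i the x_i + q + 1 neighbours with smaller x_i or lying in C,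
   q = floor((x_1 + x_2)/(d - 2)), plus their mirror images: 2c + 2 >= r in all.
   Then the tail coordinates are released one at a time, from the last one down:
   on a line in direction j a point at depth h from the ends has 2h neighbours of
   smaller depth, which lowers the threshold by 2h while the corners to be filled
   shrink by h.  What remains is the rook's graph on the two head coordinates,
   with threshold at most 2 rho + 2 and two opposite corner triangles of size rho
   already in S; peeling off L-shaped layers from the outside fills it. *)

From mathcomp Require Import all_boot all_order all_algebra.
From mathcomp Require Import zify ring.
Set Implicit Arguments. Unset Strict Implicit. Unset Printing Implicit Defensive.
Import Order.TTheory GRing.Theory Num.Theory.

Definition upd (I : finType) (T : Type) (f : {ffun I -> T}) (i : I) (y : T) :
  {ffun I -> T} := [ffun j => if j == i then y else f j].

Section Update.
Variables (I : finType) (T : Type).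
Implicit Types (f : {ffun I -> T}) (i j : I) (y z : T).

Lemma upd_same f i y : upd f i y i = y.
Proof. by rewrite ffunE eqxx. Qed.

Lemma upd_other f i j y : j != i -> upd f i y j = f j.
Proof. by rewrite ffunE => /negbTE ->. Qed.

Lemma upd_upd f i y z : upd (upd f i y) i z = upd f i z.
Proof. by apply/ffunP => j; rewrite !ffunE; case: eqP. Qed.

Lemma upd_updC f i j y z : i != j -> upd (upd f i y) j z = upd (upd f j z) i y.
Proof.
move=> ij; apply/ffunP => k; rewrite !ffunE.
by case: eqP => [->|//]; rewrite eq_sym (negbTE ij).
Qed.

End Update.

Lemma card_seq_ge m (a : 'I_m) (P : pred 'I_m) (s : seq nat) :
  uniq s -> (forall k, k \in s -> k < m /\ k <> a) ->
  (forall b : 'I_m, (b : nat) \in s -> P b) ->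
  size s <= #|[set b | (b != a) && P b]|.
Proof.
move=> s_uniq s_ok s_P; rewrite cardE -(size_map val).
apply: uniq_leq_size => // k ks; have [km ka] := s_ok k ks.
have -> : k = val (Ordinal km) by [].
rewrite map_f // mem_enum !inE s_P ?andbT //.
by apply/eqP => /(congr1 val).
Qed.

Lemma card_intervals_ge m (a : 'I_m) (P : pred 'I_m) lo1 n1 lo2 n2 :
  lo1 + n1 <= lo2 -> lo2 + n2 <= m ->
  (forall k, lo1 <= k < lo1 + n1 \/ lo2 <= k < lo2 + n2 -> k <> a) ->
  (forall b : 'I_m, lo1 <= b < lo1 + n1 \/ lo2 <= b < lo2 + n2 -> P b) ->
  n1 + n2 <= #|[set b | (b != a) && P b]|.
Proof.
move=> sep bound not_a in_P.
have := @card_seq_ge m a P (iota lo1 n1 ++ iota lo2 n2).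
rewrite size_cat !size_iota; apply.
- by rewrite cat_uniq !iota_uniq andbT /=; apply/hasPn => k; rewrite !mem_iota; lia.
- by move=> k; rewrite mem_cat !mem_iota => k_in; split; [lia | apply: not_a; lia].
- by move=> b; rewrite mem_cat !mem_iota => b_in; apply: in_P; lia.
Qed.

(* The second coordinate b is measured from the far end, so that the two corner
   triangles are exchanged by transposition. *)
Section GridEdge.
Variables (n rho s : nat) (Q : 'I_n -> 'I_n -> bool).
Hypotheses (s_le : s <= rho.*2.+2) (n_ge : rho.*2.+2 <= n).
Hypothesis Q_low : forall a b : 'I_n, n.-1 + a <= rho + b -> Q a b.
Hypothesis Q_high : forall a b : 'I_n, n.-1 + b <= rho + a -> Q a b.
Hypothesis Q_closed : forall a b : 'I_n,
  s <= #|[set a' | (a' != a) && Q a' b]| + #|[set b' | (b' != b) && Q a b']| -> Q a b.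

Lemma grid_edge k : k <= rho -> (forall a b : 'I_n, minn a b < k -> Q a b) ->
  forall a b : 'I_n, a = k :> nat -> k <= b -> Q a b.
Proof.
move=> k_le below a b ak; have [m] := ubnP b.
elim: m b => // m IHm b; rewrite ltnS => b_le kb.
case: (leqP (n.-1 + a) (rho + b)) => [low | not_low]; first exact: Q_low.
have a_lt := ltn_ord a; have b_lt := ltn_ord b.
apply: Q_closed; apply: leq_trans s_le _.
have row : k + (rho.+1 - b) <= #|[set a' | (a' != a) && Q a' b]|.
  apply: (card_intervals_ge (lo1 := 0) (lo2 := n - (rho.+1 - b)));
    [lia | lia | move=> c; lia |].
  by move=> a' [a'_lt | a'_high]; [apply: below; lia | apply: Q_high; lia].
have col : b + (rho.+1 - k) <= #|[set b' | (b' != b) && Q a b']|.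
  apply: (card_intervals_ge (lo1 := 0) (lo2 := n - (rho.+1 - k)));
    [lia | lia | move=> c; lia |].
  move=> b' [b'_lt | b'_high]; last by apply: Q_low; lia.
  by case: (ltnP b' k) => [b'_k | k_b']; [apply: below; lia | apply: (IHm b') => //; lia].
lia.
Qed.

End GridEdge.

Lemma grid_full n rho s (Q : 'I_n -> 'I_n -> bool) :
  s <= rho.*2.+2 -> rho.*2.+2 <= n ->
  (forall a b : 'I_n, n.-1 + a <= rho + b -> Q a b) ->
  (forall a b : 'I_n, n.-1 + b <= rho + a -> Q a b) ->
  (forall a b : 'I_n,
     s <= #|[set a' | (a' != a) && Q a' b]| + #|[set b' | (b' != b) && Q a b']| -> Q a b) ->
  forall a b, Q a b.
Proof.
move=> s_le n_ge Q_low Q_high Q_closed.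
have QT_closed (a b : 'I_n) :
    s <= #|[set b' | (b' != b) && Q a b']| + #|[set a' | (a' != a) && Q a' b]| -> Q a b.
  by rewrite addnC; apply: Q_closed.
suff layer k : forall a b : 'I_n, minn a b < k -> Q a b.
  by move=> a b; apply: (layer n); rewrite gtn_min ltn_ord.
elim: k => [//|k IHk] a b; rewrite ltnS => ab_le.
case: (ltnP (minn a b) k) => [|ab_ge]; first exact: IHk.
case: (leqP s k.*2) => [s_small | s_big].
  have low_nbrs (c : 'I_n) (P : pred 'I_n) :
      k <= c -> (forall c' : 'I_n, c' < k -> P c') -> k <= #|[set c' | (c' != c) && P c']|.
    move=> kc P_low; have := ltn_ord c; rewrite -[k]addn0 => c_lt.
    apply: (card_intervals_ge (lo1 := 0) (lo2 := k)); [lia | lia | move=> x; lia |].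
    by move=> c' [? | ?]; apply: P_low; lia.
  apply: Q_closed; apply: leq_trans s_small _; rewrite -addnn.
  by apply: leq_add; apply: low_nbrs; try lia; move=> c c_lt; apply: IHk; lia.
have k_le : k <= rho by lia.
case: (leqP a b) => ab.
  by apply: (grid_edge s_le n_ge Q_low Q_high Q_closed k_le IHk); lia.
apply: (grid_edge (Q := fun a b => Q b a) s_le n_ge _ _ _ k_le); try lia.
- by move=> a' b'; apply: Q_high.
- by move=> a' b'; apply: Q_low.
- by move=> a' b'; apply: QT_closed.
- by move=> a' b' ab'; apply: IHk; rewrite minnC.
Qed.

Section Vertices.
Variables n d : nat.
Implicit Types (x u v : vtx n d) (t : {ffun 'I_d -> bool}) (S : {set vtx n d}).

Lemma reflK t : involutive (@refl n d t).
Proof. by move=> x; apply/ffunP => i; rewrite !ffunE; case: (t i); rewrite ?rev_ordK. Qed.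

Lemma refl_upd t x i b :
  refl t (upd x i b) = upd (refl t x) i (if t i then rev_ord b else b).
Proof. by apply/ffunP => j; rewrite !ffunE; case: eqP => [->|]. Qed.

Lemma refl_upd_sign t x i (c : bool) :
  refl (upd t i c) x = upd (refl t x) i (if c then rev_ord (x i) else x i).
Proof. by apply/ffunP => j; rewrite !ffunE; case: eqP => [->|]. Qed.

Definition line_nbrs S v i : nat := #|[set b | (b != v i) && (upd v i b \in S)]|.

Lemma line_nbrsS S S' v i : S \subset S' -> line_nbrs S v i <= line_nbrs S' v i.
Proof.
move=> /subsetP sub; apply/subset_leq_card/subsetP => b.
by rewrite !inE => /andP [-> /sub].
Qed.

Lemma line_nbrs_refl S t x i : line_nbrs S (refl t x) i = line_nbrs (refl t @^-1: S) x i.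
Proof.
rewrite /line_nbrs; case ti: (t i).
  rewrite -(card_preimset _ (@rev_ord_inj n)); apply: eq_card => b.
  by rewrite !inE refl_upd ti ffunE ti (inj_eq rev_ord_inj).
by apply: eq_card => b; rewrite !inE refl_upd ti ffunE ti.
Qed.

Lemma line_nbrs_mirror S x i s :
  (forall b, upd x i b \in S -> upd x i (rev_ord b) \in S) -> uniq s ->
  (forall k, k \in s -> k.*2.+1 < n /\ k <> x i) -> (x i).*2.+1 < n ->
  (forall b : 'I_n, (b : nat) \in s -> upd x i b \in S) -> (size s).*2 <= line_nbrs S x i.
Proof.
move=> S_flip s_uniq s_ok xi_low s_S; pose mirror k := n - k.+1.
have -> : (size s).*2 = size (s ++ map mirror s) by rewrite size_cat size_map addnn.
apply: card_seq_ge.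
- rewrite cat_uniq s_uniq map_inj_in_uniq; last first.
    by move=> k k' /s_ok [? _] /s_ok [? _]; rewrite /mirror => ?; lia.
  rewrite s_uniq andbT /=; apply/hasPn => _ /mapP [k /s_ok [? _] ->].
  apply/negP => /s_ok [mk_low _]; move: mk_low; rewrite /mirror; lia.
- move=> k; rewrite mem_cat => /orP [/s_ok [? ?]|/mapP [k' /s_ok [? ?] ->]].
    by split=> //; lia.
  by rewrite /mirror; split; lia.
move=> b; rewrite mem_cat => /orP [/s_S //|/mapP [k ks eb]].
rewrite -[b]rev_ordK; apply: S_flip; apply: s_S.
have [k_low _] := s_ok k ks; rewrite /= eb /mirror (_ : n - (n - k.+1).+1 = k) //; lia.
Qed.

Lemma adjK_upd v i b : b != v i -> adjK v (upd v i b).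
Proof.
move=> b_new; rewrite /adjK (_ : [set j | _] = [set i]) ?cards1 //.
apply/setP => j; rewrite !inE ffunE.
by case: (eqVneq j i) => [->|]; rewrite ?eqxx // eq_sym.
Qed.

Lemma sum_line_nbrs_le S v :
  \sum_(i < d) line_nbrs S v i <= #|[set u | adjK v u && (u \in S)]|.
Proof.
pose P := [set p : 'I_d * 'I_n | (p.2 != v p.1) && (upd v p.1 p.2 \in S)].
have -> : \sum_(i < d) line_nbrs S v i = #|P|.
  rewrite -sum1_card (eq_bigr (fun i => \sum_(b | (b != v i) && (upd v i b \in S)) 1)).
    by rewrite pair_big_dep; apply: eq_bigl => p; rewrite inE.
  by move=> i _; rewrite /line_nbrs -sum1_card; apply: eq_bigl => b; rewrite inE.
pose f (p : 'I_d * 'I_n) := upd v p.1 p.2.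
have f_inj : {in P &, injective f}.
  move=> [i b] [i' b'] /[!inE] /= /andP [b_new _] /andP [b'_new _] /ffunP e.
  have := e i; rewrite /f /= upd_same.
  case: (eqVneq i i') => [<-|ii']; first by rewrite upd_same => ->.
  by rewrite upd_other // => eb; move: b_new; rewrite eb eqxx.
rewrite -(card_in_imset f_inj); apply/subset_leq_card/subsetP => u /imsetP [p].
by rewrite !inE => /andP [p_new p_S] ->; rewrite adjK_upd.
Qed.

Definition bootstrap_closed r S : Prop :=
  forall v, r <= \sum_(i < d) line_nbrs S v i -> v \in S.

Lemma boot_stable r (A0 : {set vtx n d}) : exists k, boot r A0 k.+1 = boot r A0 k.
Proof.
pose N := #|vtx n d|.
have [/existsP [k /eqP stable]|/existsPn moving] :=
  boolP [exists k : 'I_N.+1, boot r A0 k.+1 == boot r A0 k]; first by exists k.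
have grow k : k <= N.+1 -> k <= #|boot r A0 k|.
  elim: k => [//|k IHk] k_le; apply: leq_ltn_trans (IHk (ltnW k_le)) _.
  rewrite proper_card // properEneq subsetUl andbT.
  by have := moving (Ordinal k_le); rewrite eq_sym.
by have := leq_trans (grow _ (leqnn _)) (max_card _); rewrite ltnn.
Qed.

Lemma percolating_of_closed r (A0 : {set vtx n d}) :
  (forall S, A0 \subset S -> bootstrap_closed r S -> forall v, v \in S) ->
  percolating r A0.
Proof.
move=> closed_full v; have [k stable] := boot_stable r A0; exists k.
apply: closed_full v.
  by elim: k {stable} => [|k IHk] //=; rewrite (subset_trans IHk) ?subsetUl.
move=> u u_many; rewrite -stable /= inE; apply/orP; right.
by rewrite inE (leq_trans u_many) ?sum_line_nbrs_le.
Qed.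

Definition head_sum j x : nat := \sum_(i < d | i < j) (x i : nat).
Definition coord_sum x : nat := \sum_(i < d) (x i : nat).

Lemma sum_upd_in (P : pred 'I_d) x i k : P i ->
  \sum_(j < d | P j) (upd x i k j : nat) + x i = \sum_(j < d | P j) (x j : nat) + k.
Proof.
move=> Pi; rewrite !(bigD1 i Pi) /= upd_same.
under eq_bigr => j /andP [_ ji] do rewrite upd_other //.
by rewrite -addnA [RHS]addnC [(x i : nat) + _]addnC.
Qed.

Lemma sum_upd_out (P : pred 'I_d) x i k : ~~ P i ->
  \sum_(j < d | P j) (upd x i k j : nat) = \sum_(j < d | P j) (x j : nat).
Proof.
move=> nPi; apply: eq_bigr => j Pj; rewrite upd_other //.
by apply: contraNneq nPi => <-.
Qed.

Lemma leq_coord_sum x i : x i <= coord_sum x.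
Proof. by rewrite /coord_sum (bigD1 i) //= leq_addr. Qed.

Lemma sum_head_succ (F : 'I_d -> nat) j (jd : j < d) :
  \sum_(i < d | i < j.+1) F i = \sum_(i < d | i < j) F i + F (Ordinal jd).
Proof.
rewrite (bigD1 (Ordinal jd)) //= addnC; congr (_ + _); apply: eq_bigl => i.
by rewrite ltnS leq_eqVlt -val_eqE /=; case: ltngtP.
Qed.

Lemma sum_head_tail (F : 'I_d -> nat) j :
  \sum_(i < d) F i = \sum_(i < d | i < j) F i + \sum_(i < d | j <= i) F i.
Proof.
have -> : \sum_(i < d | j <= i) F i = \sum_(i < d | ~~ (i < j)) F i.
  by apply: eq_bigl => i; rewrite leqNgt.
exact: bigID.
Qed.

Lemma coord_sum_upd x (i : 'I_d) (k : 'I_n) : coord_sum (upd x i k) + x i = coord_sum x + k.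
Proof. exact: (@sum_upd_in xpredT). Qed.

Lemma head_sum_upd_lt j x (i : 'I_d) (k : 'I_n) :
  i < j -> head_sum j (upd x i k) + x i = head_sum j x + k.
Proof. exact: (@sum_upd_in (fun i : 'I_d => i < j)). Qed.

Lemma head_sum_upd_ge j x (i : 'I_d) (k : 'I_n) :
  j <= i -> head_sum j (upd x i k) = head_sum j x.
Proof. by rewrite leqNgt; exact: (@sum_upd_out (fun i : 'I_d => i < j)). Qed.

Lemma sum_head_all (F : 'I_d -> nat) : \sum_(i < d | i < d) F i = \sum_(i < d) F i.
Proof. by apply: eq_bigl => i; rewrite ltn_ord. Qed.

Lemma head_sum_succ j x (jd : j < d) : head_sum j.+1 x = head_sum j x + x (Ordinal jd).
Proof. exact: sum_head_succ. Qed.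

Lemma tail_sum j x : \sum_(i < d | j <= i) (x i : nat) = coord_sum x - head_sum j x.
Proof. by rewrite /coord_sum (sum_head_tail _ j) addKn. Qed.

Lemma leq_head_sum j x : head_sum j x <= coord_sum x.
Proof. by rewrite /coord_sum (sum_head_tail _ j) leq_addr. Qed.

Lemma tcE t k (kd : k < d) : tc t k = t (Ordinal kd).
Proof.
apply/existsP/idP => [[i /andP [/eqP ik]]|]; last by exists (Ordinal kd); rewrite eqxx.
by rewrite (_ : Ordinal kd = i) //; apply: val_inj.
Qed.

Definition Tcore S := [set x | [forall t in Tset d, refl t x \in S]].

Lemma Tcore_closed r S : bootstrap_closed r S -> bootstrap_closed r (Tcore S).
Proof.
move=> S_closed v v_many; rewrite inE; apply/forall_inP => t tT.
apply: S_closed; apply: leq_trans v_many _; apply: leq_sum => i _.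
rewrite line_nbrs_refl; apply/line_nbrsS/subsetP => u.
by rewrite !inE => /forall_inP; apply.
Qed.

Lemma Cset_sub_Tcore r S : calC n d r \subset S -> Cset n d r \subset Tcore S.
Proof.
move=> /subsetP CS; apply/subsetP => x xC; rewrite inE; apply/forall_inP => t tT.
by apply: CS; apply/bigcupP; exists t => //; rewrite inE; apply/exists_inP; exists x.
Qed.

End Vertices.

Section HeadCoordinates.
Variables (n d : nat).
Hypothesis d2 : 1 < d.
Let i0 : 'I_d := Ordinal (ltnW d2).
Let i1 : 'I_d := Ordinal d2.

Lemma in_Tset t : (t \in Tset d) = (t i0 == t i1).
Proof. by rewrite inE (tcE t (ltnW d2)) (tcE t d2). Qed.

Lemma Tset_upd t (i : 'I_d) c : 2 <= i -> t \in Tset d -> upd t i c \in Tset d.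
Proof.
by move=> i2; rewrite !in_Tset !upd_other //; apply/eqP => /(congr1 val) /=; lia.
Qed.

Lemma sum_head2 (F : 'I_d -> nat) : \sum_(i < d | i < 2) F i = F i0 + F i1.
Proof. by rewrite (sum_head_succ _ d2) (sum_head_succ _ (ltnW d2)) big_pred0. Qed.

Lemma sum_tail_const e : \sum_(i < d | 2 <= i) e = (d - 2) * e.
Proof.
have := sum_head_tail (fun _ : 'I_d => e) 2; rewrite sum_head2 big_const_ord iter_addn_0.
by rewrite mulnBl mulnC; lia.
Qed.

Lemma Tcore_flip S (x : vtx n d) (i : 'I_d) :
  2 <= i -> x \in Tcore S -> upd x i (rev_ord (x i)) \in Tcore S.
Proof.
move=> i2; rewrite !inE => /forall_inP xS; apply/forall_inP => t tT.
have := xS _ (Tset_upd (~~ t i) i2 tT).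
by rewrite refl_upd_sign refl_upd; case: (t i); rewrite ?rev_ordK.
Qed.

Lemma in_Bset r (x : vtx n d) :
  (x \in Bset n d r) = ((d - 2) * coord_sum x + head_sum 2 x < (d - 2) * cr r).
Proof.
have d1_gt0 : (0 < d%:R - 1 :> rat)%R by rewrite subr_gt0 ltr1n.
have wt_scaled (i : 'I_d) : ((d%:R - 1) * wt i = (d - 2 + (i < 2))%N%:R :> rat)%R.
  rewrite /wt /delta natrD natrB // -/(1 + 1)%R; case: ifP => _.
    by rewrite /=; ring.
  by rewrite mulrCA divff ?gt_eqF // mulr1 addr0.
rewrite inE -(ltr_pM2l d1_gt0) mulr_sumr mulrA mulrCA divff ?gt_eqF // mulr1.
rewrite (eq_bigr (fun i : 'I_d => (((d - 2 + (i < 2)) * x i)%N%:R)%R)); last first.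
  by move=> i _; rewrite mulrA wt_scaled natrM.
have -> : (d%:R - 2 = (d - 2)%N%:R :> rat)%R by rewrite natrB.
rewrite -natr_sum -natrM ltr_nat.
congr (_ < _).
rewrite (eq_bigr (fun i : 'I_d => (d - 2) * x i + (if i < 2 then x i : nat else 0))).
  by rewrite big_split -big_distrr -big_mkcond.
by move=> i _; case: (i < 2); rewrite mulnDl ?mul1n ?mul0n.
Qed.

Lemma in_Cset r (x : vtx n d) : (x \in Cset n d r) =
  (coord_sum x <= cr r) && ((d - 2) * cr r <= (d - 2) * coord_sum x + head_sum 2 x).
Proof. by rewrite in_setD in_Bset inE -leqNgt andbC. Qed.

Lemma sum_if_head (x : vtx n d) D e :
  \sum_(i < d) (if i < 2 then D else (x i + e).*2) =
  (D + (coord_sum x - head_sum 2 x) + (d - 2) * e).*2.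
Proof.
rewrite (sum_head_tail _ 2) sum_head2 /=.
rewrite (eq_bigr (fun i : 'I_d => 2 * x i + 2 * e)); last first.
  by move=> i; rewrite leqNgt => /negbTE ->; rewrite doubleD -!mul2n.
rewrite big_split /= sum_tail_const -big_distrr /= tail_sum mulnCA.
lia.
Qed.

Definition same_tail j (v0 v : vtx n d) : Prop := forall i : 'I_d, j <= i -> v i = v0 i.

Definition slab_closed (S : {set vtx n d}) j v0 s : Prop :=
  forall v, same_tail j v0 v -> s <= \sum_(i < d | i < j) line_nbrs S v i -> v \in S.

Definition slabs_fill (S : {set vtx n d}) j : Prop :=
  forall v0 rho s, s <= rho.*2.+2 -> rho.*2.+2 <= n -> slab_closed S j v0 s ->
  (forall v t, same_tail j v0 v -> t \in Tset d -> head_sum j (refl t v) <= rho -> v \in S) ->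
  forall v, same_tail j v0 v -> v \in S.

Lemma slabs_fill2 S : slabs_fill S 2.
Proof.
move=> v0 rho s s_le n_ge v0_closed corner v v_tail.
have i01 : i0 != i1 by [].
(* Reversing the second head coordinate turns the two corners into those of [grid_full]. *)
pose pt (a b : 'I_n) := upd (upd v0 i0 a) i1 (rev_ord b).
have pt0 a b : pt a b i0 = a by rewrite upd_other ?upd_same.
have pt1 a b : pt a b i1 = rev_ord b by rewrite upd_same.
have pt_tail a b : same_tail 2 v0 (pt a b).
  by move=> i i2; rewrite !upd_other //; apply/eqP => /(congr1 val) /=; lia.
have -> : v = pt (v i0) (rev_ord (v i1)).
  apply/ffunP => i; rewrite !ffunE rev_ordK.
  case: eqP => [-> //|ni1]; case: eqP => [-> //|ni0]; apply: v_tail.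
  move: ni0 ni1; case: i => [[|[|k]] hk] // ni0 ni1.
    by case: ni0; apply: val_inj.
  by case: ni1; apply: val_inj.
apply: (grid_full (Q := fun a b => pt a b \in S) s_le n_ge).
- move=> a b ab; apply: (corner _ [ffun => false]) => //; first by rewrite in_Tset !ffunE.
  by rewrite /head_sum sum_head2 !ffunE /=; have := ltn_ord b; lia.
- move=> a b ab; apply: (corner _ [ffun i : 'I_d => i < 2]) => //.
    by rewrite in_Tset !ffunE.
  by rewrite /head_sum sum_head2 !ffunE /=; have := ltn_ord a; lia.
move=> a b many; apply: v0_closed => //; rewrite sum_head2.
have -> : line_nbrs S (pt a b) i0 = #|[set a' | (a' != a) && (pt a' b \in S)]|.
  by apply: eq_card => a'; rewrite !inE pt0 upd_updC // upd_upd.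
have -> : line_nbrs S (pt a b) i1 = #|[set b' | (b' != b) && (pt a b' \in S)]|.
  rewrite /line_nbrs -(card_preimset _ (@rev_ord_inj n)); apply: eq_card => b'.
  by rewrite !inE pt1 (inj_eq rev_ord_inj) upd_upd.
exact: many.
Qed.

Lemma slabs_fill_succ S j : 2 <= j -> j < d -> slabs_fill S j -> slabs_fill S j.+1.
Proof.
move=> j2 jd fill_j v0 rho s s_le n_ge v0_closed corner; set ij := Ordinal jd.
have tail_sub u v : same_tail j v u -> same_tail j.+1 v0 v -> same_tail j.+1 v0 u.
  by move=> uv vv0 i ji; rewrite uv ?vv0 // ltnW.
have tail_upd v b : same_tail j.+1 v0 v -> same_tail j.+1 v0 (upd v ij b).
  by move=> vv0 i ji; rewrite upd_other ?vv0 //; apply/eqP => /(congr1 val) /=; lia.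
(* Points of smaller depth on the line through v in direction j are already in S;
   they supply 2 (depth v) neighbours, and reflecting coordinate j to the near end
   costs depth v of the corner. *)
pose depth (v : vtx n d) := minn (v ij) (n - (v ij).+1).
suff fill m v : same_tail j.+1 v0 v -> depth v < m -> v \in S.
  by move=> v vv0; apply: (fill n) => //; rewrite gtn_min ltn_ord.
elim: m v => // m IHm v vv0; rewrite ltnS => v_depth; have v_lt := ltn_ord (v ij).
have line_j u : same_tail j.+1 v0 u -> u ij = v ij -> (depth v).*2 <= line_nbrs S u ij.
  move=> uv0 uv; rewrite -addnn.
  apply: (card_intervals_ge (lo1 := 0) (lo2 := n - depth v)); rewrite ?uv /depth; try lia.
  move=> b b_in; apply: IHm; first exact: tail_upd.
  by move: v_depth; rewrite /depth upd_same; have := ltn_ord b; lia.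
case: (ltnP rho (depth v)) => [deep | shallow].
  apply: v0_closed => //; rewrite (sum_head_succ _ jd) -/ij; have := line_j v vv0 erefl; lia.
apply: (fill_j v (rho - depth v) (s - (depth v).*2)); try lia.
- move=> u uv many; have uv0 := tail_sub _ _ uv vv0; apply: v0_closed => //.
  by rewrite (sum_head_succ _ jd) -/ij; have := line_j u uv0 (uv ij (leqnn _)); lia.
- move=> u t uv tT u_low; apply: (corner u (upd t ij (n - (v ij).+1 < v ij))).
  + exact: tail_sub uv vv0.
  + exact: Tset_upd.
  rewrite (head_sum_succ _ jd) -/ij refl_upd_sign head_sum_upd_ge // upd_same uv //.
  by move: u_low shallow; rewrite /depth; case: ifP => /= flip; lia.
- by [].
Qed.

Lemma slabs_fill_all S : slabs_fill S d.
Proof.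
have fill k : k + 2 <= d -> slabs_fill S (k + 2).
  elim: k => [|k IHk] kd; first exact: slabs_fill2.
  by rewrite addSn; apply: slabs_fill_succ; [lia | lia | apply: IHk; lia].
by have := fill (d - 2); rewrite subnK //; apply.
Qed.

End HeadCoordinates.

Section SimplexFill.
Variables (n d r : nat) (S : {set vtx n d}).
Hypotheses (d2 : 1 < d) (n_big : (cr r).*2.+2 <= n).
Hypothesis S_closed : bootstrap_closed r S.
Hypothesis CS : Cset n d r \subset S.
Hypothesis S_flip : forall x (i : 'I_d), 2 <= i -> x \in S -> upd x i (rev_ord (x i)) \in S.
Let c := cr r.

Lemma head_line_nbrs x (i : 'I_d) : i < 2 -> coord_sum x <= c ->
  (forall y, coord_sum y <= c -> head_sum 2 x < head_sum 2 y -> y \in S) ->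
  c - coord_sum x <= line_nbrs S x i.
Proof.
move=> i_head x_low above; have xi := leq_coord_sum x i.
rewrite -[c - _]addn0; apply: (card_intervals_ge (lo1 := (x i).+1) (lo2 := n)).
- lia.
- lia.
- by move=> k; lia.
move=> b [b_in | ]; last lia.
have := coord_sum_upd x i b; have := head_sum_upd_lt x b i_head.
by move=> ? ?; apply: above; lia.
Qed.

Lemma tail_line_nbrs x (i : 'I_d) q : 2 <= i -> coord_sum x <= c ->
  (d - 2) * q <= head_sum 2 x -> q < c - coord_sum x ->
  (forall y, head_sum 2 y = head_sum 2 x -> coord_sum y < coord_sum x -> y \in S) ->
  (x i + q.+1).*2 <= line_nbrs S x i.
Proof.
move=> i_tail x_low q_le q_lt below; have xi := leq_coord_sum x i.
set D := c - coord_sum x in q_lt.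
(* Values below x i lower the sum, values in [x i + D - q, x i + D] keep x in C. *)
rewrite -(size_iota 0 (x i)) -(size_iota (x i + D - q) q.+1) -size_cat.
apply: line_nbrs_mirror.
- by move=> b /(S_flip i_tail); rewrite upd_upd upd_same.
- by rewrite cat_uniq !iota_uniq andbT andTb; apply/hasPn => k; rewrite !mem_iota; lia.
- by move=> k; rewrite mem_cat !mem_iota => k_in; split; lia.
- lia.
move=> b; rewrite mem_cat !mem_iota => b_in.
have := coord_sum_upd x i b; have := head_sum_upd_ge x b i_tail.
case/orP: b_in => b_in y_head y_sum; first by apply: below; lia.
apply: (subsetP CS); rewrite in_Cset //; apply/andP; split; first lia.
rewrite y_head; apply: leq_trans (leq_add (leqnn _) q_le); rewrite -mulnDr leq_mul2l; lia.
Qed.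

Lemma Aset_sub : Aset n d r \subset S.
Proof.
apply/subsetP => x; rewrite inE -/(coord_sum x) -/c.
have [m] := ubnP (c - head_sum 2 x); elim: m x => // m IHm x.
rewrite ltnS => m_bound; have [w] := ubnP (coord_sum x).
elim: w x m_bound => // w IHw x; rewrite ltnS => w_bound m_bound x_low.
case xC: (x \in Cset n d r); first exact: (subsetP CS).
move: xC; rewrite in_Cset // x_low /= => /negbT; rewrite -ltnNge => x_B.
have d3 : 0 < d - 2 by move: x_B; case: (d - 2) => //; rewrite !mul0n.
set U := head_sum 2 x in x_B; set q := U %/ (d - 2).
have q_le : (d - 2) * q <= U by rewrite mulnC leq_divM.
have q_gt : U < (d - 2) * q.+1 by rewrite mulnC ltn_ceil.
have q_lt : q < c - coord_sum x.
  by rewrite -(ltn_pmul2l d3) mulnBr; apply: leq_ltn_trans q_le _; lia.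
apply: S_closed; apply: (@leq_trans (c.*2.+2)); first by rewrite /c /cr; lia.
have nbrs (i : 'I_d) : (if i < 2 then c - coord_sum x else (x i + q.+1).*2) <= line_nbrs S x i.
  case: ifP => i_head.
    apply: head_line_nbrs => // y y_low U_lt; apply: IHm => //.
    by have := leq_head_sum 2 y; lia.
  apply: tail_line_nbrs => //; first by rewrite leqNgt i_head.
  by move=> y y_head y_sum; apply: IHw => //; lia.
have : \sum_(i < d) (if i < 2 then c - coord_sum x else (x i + q.+1).*2) <=
       \sum_(i < d) line_nbrs S x i by apply: leq_sum => i _; exact: nbrs.
by rewrite sum_if_head; have := leq_head_sum 2 x; lia.
Qed.

End SimplexFill.

Unset Implicit Arguments.

Theorem lemma4p2 (n r d : nat) :
  (0 < n)%N -> (0 < r)%N -> (0 < d)%N -> (r + 1 <= n)%N -> (2 <= d)%N ->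
  percolating r (calC n d r).
Proof.
move=> _ r_gt0 _ rn d2; apply: percolating_of_closed => S CS S_closed v.
have n_big : (cr r).*2.+2 <= n by rewrite /cr; lia.
have A_core : Aset n d r \subset Tcore S.
  apply: Aset_sub n_big (Tcore_closed S_closed) (Cset_sub_Tcore CS) _ => //.
  exact: Tcore_flip.
apply: (@slabs_fill_all n d d2 S v (cr r) r _ n_big _ _ v) => //.
- by rewrite /cr; lia.
- by move=> u _; rewrite sum_head_all; apply: S_closed.
move=> u t _ tT u_low; rewrite -(reflK t u).
have : refl t u \in Tcore S by apply: (subsetP A_core); rewrite inE -sum_head_all.
by rewrite inE => /forall_inP; apply.
Qed.
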